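(* Let $G_7$ be the graph on vertex set $\{0,1,\dots,6\}$ with edge set $\{01,12,23,34,45,56,60,03,04,13,14,63,64,25\}$. Then $\beta(G_7,\mathbf 1)=\alpha(G_7,\mathbf 1)=2$, where $\mathbf 1$ is the all-ones weight vector.
   Context: A realization of a graph $G$ on $n$ vertices is a tuple $(S_1,\dots,S_n)$ of Pauli strings (tensor products of matrices from $\{I,X,Y,Z\}$) of common length with $S_i,S_j$ anticommuting iff $i\sim j$ and commuting otherwise. $\beta(G,w)=\sup_\rho\sum_iw_i\operatorname{tr}(\rho S_i)^2$ over density matrices $\rho$ (independent of the realization); $\alpha(G,w)=\max\{\sum_{i\in I}w_i:I\text{ independent}\}$. (For instance, in vertex order $0,\dots,6$, the strings $Z_1,\ X_1X_2,\ Z_2,\ Y_1X_2X_3,\ Y_1Z_3,\ Z_1Y_2,\ X_1$ on three qubits, where subscripts indicate the qubit acted on, realize $G_7$.) *)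

From HB Require Import structures.
From mathcomp Require Import all_boot all_order all_algebra.
From mathcomp Require Import classical_sets reals.
From mathcomp Require Import complex.
Set Implicit Arguments. Unset Strict Implicit. Unset Printing Implicit Defensive.
Import Order.TTheory GRing.Theory Num.Theory.
Local Open Scope ring_scope.

Inductive pauli := pI | pX | pY | pZ.

Section Pauli.
Variable R : realType.
Local Notation C := R[i].

(* the single-qubit Pauli matrices; index 0 = |0>, 1 = |1> *)
Definition pauli_mx (p : pauli) : 'M[C]_2 :=
  \matrix_(a < 2, b < 2)
   match p with
   | pI => if a == b then 1 else 0
   | pX => if a == b then 0 else 1
   | pY => if a == b then 0 else
             (if (a : nat) == 0%N then - (Complex 0 1) else Complex 0 1)
   | pZ => if a == b then (if (a : nat) == 0%N then 1 else -1) else 0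
   end.

Definition bitk (k i : nat) : 'I_2 := inord (odd (i %/ 2 ^ k)).

(* the Pauli string s_0 (x) s_1 (x) ... (x) s_{n-1} acting on (C^2)^{(x) n},
   written out entrywise (qubit k <-> binary digit k of the basis index) *)
Definition pauli_string n (s : n.-tuple pauli) : 'M[C]_(2 ^ n) :=
  \matrix_(i < 2 ^ n, j < 2 ^ n)
    \prod_(k < n) pauli_mx (tnth s k) (bitk k i) (bitk k j).

Definition adjmx m (A : 'M[C]_m) : 'M[C]_m := (map_mx Num.conj A)^T.

Definition density m (rho : 'M[C]_m) : Prop :=
  [/\ adjmx rho = rho,
      forall v : 'cV[C]_m, 0 <= ((map_mx Num.conj v)^T *m rho *m v) 0 0
    & \tr rho = 1].

Definition realizes N n (G : rel 'I_N) (S : 'I_N -> n.-tuple pauli) : Prop :=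
  forall i j : 'I_N,
    if G i j then pauli_string (S i) *m pauli_string (S j)
                  = - (pauli_string (S j) *m pauli_string (S i))
    else pauli_string (S i) *m pauli_string (S j)
                  = pauli_string (S j) *m pauli_string (S i).

(* beta(G,w), computed through a realization S of G:
   sup over density matrices of sum_i w_i tr(rho S_i)^2
   (tr(rho S_i) is real for Hermitian rho, S_i; we take its real part) *)
Definition beta N n (S : 'I_N -> n.-tuple pauli) (w : 'I_N -> R) : R :=
  sup (fun x : R => exists rho : 'M[C]_(2 ^ n),
         density rho /\
         x = \sum_(i < N) w i * (complex.Re (\tr (rho *m pauli_string (S i)))) ^+ 2).

Definition indep N (G : rel 'I_N) (A : {set 'I_N}) : bool :=
  [forall i in A, forall j in A, ~~ G i j].

Definition alpha N (G : rel 'I_N) (w : 'I_N -> R) : R :=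
  \big[Num.max/0]_(A : {set 'I_N} | indep G A) \sum_(i in A) w i.

End Pauli.

Definition G7_edges : seq (nat * nat) :=
  [:: (0,1); (1,2); (2,3); (3,4); (4,5); (5,6); (6,0); (0,3); (0,4);
      (1,3); (1,4); (6,3); (6,4); (2,5)]%N.

Definition G7 : rel 'I_7 := fun i j =>
  ((val i, val j) \in G7_edges) || ((val j, val i) \in G7_edges).

(* the realization from the paper (qubits 1,2,3 <-> tuple positions 0,1,2):
   Z1, X1X2, Z2, Y1X2X3, Y1Z3, Z1Y2, X1 *)
Definition S7 (i : 'I_7) : 3.-tuple pauli :=
  match val i with
  | 0 => [tuple pZ; pI; pI]
  | 1 => [tuple pX; pX; pI]
  | 2 => [tuple pI; pZ; pI]
  | 3 => [tuple pY; pX; pX]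
  | 4 => [tuple pY; pI; pZ]
  | 5 => [tuple pZ; pY; pI]
  | _ => [tuple pX; pI; pI]
  end%N.

(* The realization is checked qubitwise: a Pauli string of length 3 is a tensor
   product of single-qubit Pauli matrices, and two strings anticommute iff an odd
   number of their factors do.

   For beta <= 2, fix a state rho, write <M> = Re tr(rho M), x_k = <S_k> and
   s = sum_k x_k^2.  Since S_i, S_j anticommute exactly along edges,
   H = sum_k x_k S_k satisfies H^2 = s + 2N, where N = sum_e x_a x_b T_e runs over
   the seven non-edges e = {a, b} of G_7 with T_e = S_a S_b.  Among the T_e only
   three pairs commute, so N^2 = sum_e (x_a x_b)^2 + 2K with K a combination of the
   three products U of these pairs, which pairwise anticommute: K^2 is a scalar.
   The variance inequalities <M>^2 <= <M^2> for M = H, N, K and an elementary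
   inequality between polynomials in the x_k^2 give s^2 <= s + 2<N> and
   4<N>^2 <= s^2, whence s <= 2.  The basis state |000> attains 2, and alpha = 2
   since G_7 has no independent triple while {0, 2} is independent. *)

From mathcomp Require Import all_boot all_order all_algebra.
From mathcomp Require Import classical_sets reals complex.
From mathcomp Require Import ring lra zify.
Import Order.TTheory GRing.Theory Num.Theory.
Set Implicit Arguments. Unset Strict Implicit. Unset Printing Implicit Defensive.
Local Open Scope ring_scope.

Local Notation vtx k := (@Ordinal 7 k isT).

Section SignCommute.
Variables (K : comNzRingType) (m : nat).
Implicit Types A B D E : 'M[K]_m.

Definition sgn (b : bool) : K := if b then -1 else 1.

Lemma sgn_addb a b : sgn (a (+) b) = sgn a * sgn b.
Proof. by case: a; case: b; rewrite /sgn /= ?mulN1r ?mul1r ?mulr1 ?opprK. Qed.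

Definition sign_commute (s : bool) (A B : 'M[K]_m) := B *m A = sgn s *: (A *m B).

Lemma sign_commuteM s1 s2 s3 s4 (A B D E : 'M[K]_m) :
  sign_commute s1 A D -> sign_commute s2 A E ->
  sign_commute s3 B D -> sign_commute s4 B E ->
  sign_commute (s1 (+) s2 (+) s3 (+) s4) (A *m B) (D *m E).
Proof.
rewrite /sign_commute => hAD hAE hBD hBE.
have -> : D *m E *m (A *m B) = D *m (E *m A) *m B by rewrite !mulmxA.
rewrite hAE -scalemxAr -scalemxAl.
have -> : D *m (A *m E) *m B = (D *m A) *m (E *m B) by rewrite !mulmxA.
rewrite hAD hBE -scalemxAl -scalemxAr scalerA.
have -> : A *m D *m (B *m E) = A *m (D *m B) *m E by rewrite !mulmxA.
rewrite hBD -scalemxAr -scalemxAl !scalerA !mulmxA !sgn_addb.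
by congr (_ *: _); ring.
Qed.

Lemma sign_commute_false A B : sign_commute false A B -> B *m A = A *m B.
Proof. by rewrite /sign_commute /sgn scale1r. Qed.

Lemma commuting_involutionsM A B :
  A *m A = 1%:M -> B *m B = 1%:M -> B *m A = A *m B -> (A *m B) *m (A *m B) = 1%:M.
Proof. by move=> AA BB BA; rewrite mulmxA -(mulmxA A) BA !mulmxA AA mul1mx BB. Qed.

Lemma sum_sum_pairs n (V : zmodType) (F : 'I_n -> 'I_n -> V) :
  \sum_(i < n) \sum_(j < n) F i j =
  \sum_(i < n) F i i + \sum_(i < n) \sum_(j < n | (i < j)%N) (F i j + F j i).
Proof.
have split_row i : \sum_(j < n) F i j =
    F i i + \sum_(j < n | (i < j)%N) F i j + \sum_(j < n | (j < i)%N) F i j.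
  rewrite (bigD1 i) //= (bigID (fun j : 'I_n => (i < j)%N)) /= addrA.
  by congr (_ + _ + _); apply: eq_bigl => j; rewrite -(inj_eq val_inj) /=;
    apply/idP/idP; lia.
rewrite (eq_bigr _ (fun i _ => split_row i)) !big_split /= -addrA; congr (_ + _).
under [RHS]eq_bigr => i _ do rewrite big_split /=.
rewrite big_split /=; congr (_ + _).
rewrite (eq_bigr (fun i : 'I_n => \sum_(j < n) (if (j < i)%N then F i j else 0)));
  last by move=> i _; rewrite big_mkcond.
by rewrite exchange_big /=; apply: eq_bigr => i _; rewrite [RHS]big_mkcond.
Qed.

Lemma lin_comb_involutions_sqr n (M : 'I_n -> 'M[K]_m) (a : 'I_n -> K)
    (s : 'I_n -> 'I_n -> bool) :
  (forall i, M i *m M i = 1%:M) -> (forall i j, sign_commute (s i j) (M i) (M j)) ->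
  (\sum_(i < n) a i *: M i) *m (\sum_(i < n) a i *: M i) =
  (\sum_(i < n) a i ^+ 2) *: 1%:M +
  2%:R *: \sum_(i < n) \sum_(j < n | (i < j)%N && ~~ s i j) (a i * a j) *: (M i *m M j).
Proof.
move=> Msqr Mcomm; rewrite mulmx_suml.
under eq_bigr => i _ do rewrite mulmx_sumr.
under eq_bigr => i _ do under eq_bigr => j _ do rewrite -scalemxAl -scalemxAr scalerA.
rewrite sum_sum_pairs; congr (_ + _).
  by rewrite scaler_suml; apply: eq_bigr => i _; rewrite Msqr expr2.
rewrite scaler_sumr; apply: eq_bigr => i _.
rewrite scaler_sumr [RHS]big_mkcondr /=; apply: eq_bigr => j _.
rewrite (Mcomm i j) scalerA /sgn; case: (s i j) => /=; rewrite ?scalerA -scalerDl.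
  by rewrite (_ : _ + _ = 0) ?scale0r //; ring.
by congr (_ *: _); ring.
Qed.
End SignCommute.
Arguments sgn {K}.

Section Tensor3.
Variable K : comNzRingType.

Definition tensor3 (A B D : 'M[K]_2) : 'M[K]_(2 ^ 3) :=
  \matrix_(i, j)
    (A (bitk 0 i) (bitk 0 j) * (B (bitk 1 i) (bitk 1 j) * D (bitk 2 i) (bitk 2 j))).

Lemma sum_ord2 (F : 'I_2 -> K) : \sum_(a < 2) F a = F ord0 + F ord_max.
Proof. by rewrite !big_ord_recl big_ord0 addr0; congr (_ + F _); apply: val_inj. Qed.

Lemma bitkE k i : bitk k i = if odd (i %/ 2 ^ k) then ord_max else ord0.
Proof. by apply: val_inj; rewrite /= inordK; case: odd. Qed.

Lemma tensor3M A B D A' B' D' :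
  tensor3 A B D *m tensor3 A' B' D' = tensor3 (A *m A') (B *m B') (D *m D').
Proof.
apply/matrixP => i j; rewrite !mxE !sum_ord2 !big_ord_recl big_ord0 !mxE !bitkE /=.
ring.
Qed.

Lemma tensor3Z a b c A B D : tensor3 (a *: A) (b *: B) (c *: D) = (a * b * c) *: tensor3 A B D.
Proof. by apply/matrixP => i j; rewrite !mxE; ring. Qed.

Lemma tensor3_1 : tensor3 1%:M 1%:M 1%:M = 1%:M.
Proof.
apply/matrixP => i j; rewrite !mxE !bitkE.
case: i => [[|[|[|[|[|[|[|[|//]]]]]]]] ?]; case: j => [[|[|[|[|[|[|[|[|//]]]]]]]] ?] /=;
  by rewrite ?mulr1n ?mulr0n ?mulr1 ?mul0r ?mulr0.
Qed.

Lemma tensor3_sign_commute sA sB sD (A B D A' B' D' : 'M[K]_2) :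
  sign_commute sA A A' -> sign_commute sB B B' -> sign_commute sD D D' ->
  sign_commute (sA (+) sB (+) sD) (tensor3 A B D) (tensor3 A' B' D').
Proof.
rewrite /sign_commute => hA hB hD.
by rewrite !tensor3M hA hB hD tensor3Z !sgn_addb.
Qed.

End Tensor3.

Section PauliStrings.
Variable R : realType.
Local Notation C := R[i].
Local Notation P := (pauli_mx R).

Lemma conjC_complex (z : C) : Num.conj z = conjc z.
Proof.
case: z => a b.
have -> : (Complex a b : C) = Complex a 0 + 'i%C * Complex b 0 by simpc.
rewrite rmorphD rmorphM /= complexiE conjCi -complexiE !conj_Creal ?complex_real //.
by simpc.
Qed.

Ltac case_ord2 i := case: i => [[|[|//]] ?].
Ltac eq_complex := rewrite -[LHS]/(Complex _ _) -[RHS]/(Complex _ _); congr Complex; ring.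

Lemma pauli_mx_sqr a : P a *m P a = 1%:M.
Proof.
apply/matrixP => i j; rewrite !mxE sum_ord2 !mxE.
by case: a; case_ord2 i; case_ord2 j; eq_complex.
Qed.

Lemma adj_pauli_mx a : adjmx (P a) = P a.
Proof.
apply/matrixP => i j; rewrite !mxE conjC_complex.
by case: a; case_ord2 i; case_ord2 j; eq_complex.
Qed.

Definition pauli_anticomm (a b : pauli) : bool :=
  match a, b with
  | pI, _ | _, pI | pX, pX | pY, pY | pZ, pZ => false
  | _, _ => true
  end.

Lemma pauli_mx_sign_commute a b : sign_commute (pauli_anticomm a b) (P a) (P b).
Proof.
apply/matrixP => i j; rewrite !mxE !sum_ord2 !mxE.
by case: a; case: b; case_ord2 i; case_ord2 j; eq_complex.
Qed.

Lemma adj_tensor3 (A B D : 'M[C]_2) :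
  adjmx (tensor3 A B D) = tensor3 (adjmx A) (adjmx B) (adjmx D).
Proof. by apply/matrixP => i j; rewrite !mxE !rmorphM. Qed.

Definition string_anticomm n (s t : n.-tuple pauli) : bool :=
  \big[addb/false]_(k < n) pauli_anticomm (tnth s k) (tnth t k).

Lemma pauli_string3 (s : 3.-tuple pauli) : pauli_string R s =
  tensor3 (P (tnth s ord0)) (P (tnth s (lift ord0 ord0)))
          (P (tnth s (lift ord0 (lift ord0 ord0)))).
Proof. by apply/matrixP => i j; rewrite mxE [RHS]mxE !big_ord_recl big_ord0 mulr1. Qed.

Lemma pauli_string3_sqr (s : 3.-tuple pauli) : pauli_string R s *m pauli_string R s = 1%:M.
Proof. by rewrite pauli_string3 tensor3M !pauli_mx_sqr tensor3_1. Qed.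

Lemma adj_pauli_string3 (s : 3.-tuple pauli) : adjmx (pauli_string R s) = pauli_string R s.
Proof. by rewrite pauli_string3 adj_tensor3 !adj_pauli_mx. Qed.

Lemma pauli_string3_sign_commute (s t : 3.-tuple pauli) :
  sign_commute (string_anticomm s t) (pauli_string R s) (pauli_string R t).
Proof.
rewrite !pauli_string3 /string_anticomm !big_ord_recl big_ord0 addbF addbA.
exact: tensor3_sign_commute (pauli_mx_sign_commute _ _) (pauli_mx_sign_commute _ _)
  (pauli_mx_sign_commute _ _).
Qed.

End PauliStrings.

Lemma G7_string_anticomm (i j : 'I_7) : G7 i j = string_anticomm (S7 i) (S7 j).
Proof.
rewrite /string_anticomm !big_ord_recl big_ord0.
by case: i => [[|[|[|[|[|[|[|//]]]]]]] ?]; case: j => [[|[|[|[|[|[|[|//]]]]]]] ?].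
Qed.

Lemma G7_sym : symmetric G7.
Proof. by move=> i j; rewrite /G7 orbC. Qed.

Lemma realizes_G7 (R : realType) : realizes R G7 S7.
Proof.
move=> i j; have := pauli_string3_sign_commute R (S7 j) (S7 i).
rewrite /sign_commute -G7_string_anticomm G7_sym.
by case: (G7 i j); rewrite /sgn ?scaleN1r ?scale1r.
Qed.

Section Expectation.
Variables (R : realType) (m : nat).
Local Notation C := R[i].
Local Notation Re := complex.Re.
Local Notation rc := (real_complex R).
Implicit Types (rho A M : 'M[C]_m).

Lemma adjmxM A M : adjmx (A *m M) = adjmx M *m adjmx A.
Proof. by rewrite /adjmx map_mxM trmx_mul. Qed.

Lemma adjmx_commuteM A M :
  adjmx A = A -> adjmx M = M -> M *m A = A *m M -> adjmx (A *m M) = A *m M.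
Proof. by move=> hA hM AM; rewrite adjmxM hA hM. Qed.

Lemma adjmx_real_comb n (c : 'I_n -> R) (M : 'I_n -> 'M[C]_m) :
  adjmx (\sum_(i < n) rc (c i) *: M i) = \sum_(i < n) rc (c i) *: adjmx (M i).
Proof.
apply/matrixP => i j; rewrite !mxE !summxE rmorph_sum.
by apply: eq_bigr => k _; rewrite !mxE rmorphM /= conj_Creal ?complex_real.
Qed.

Lemma ReD (z w : C) : Re (z + w) = Re z + Re w. Proof. by case: z; case: w. Qed.

Lemma Re_rcM (a : R) (z : C) : Re (rc a * z) = a * Re z.
Proof. by case: z => u v /=; ring. Qed.

Definition expect rho M : R := Re (\tr (rho *m M)).

Lemma expectD rho A M : expect rho (A + M) = expect rho A + expect rho M.
Proof. by rewrite /expect mulmxDr mxtraceD ReD. Qed.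

Lemma expectB rho A M : expect rho (A - M) = expect rho A - expect rho M.
Proof. by rewrite /expect mulmxBr linearB /= ReD; case: (\tr (rho *m M)). Qed.

Lemma expectZ rho a M : expect rho (rc a *: M) = a * expect rho M.
Proof. by rewrite /expect -scalemxAr mxtraceZ Re_rcM. Qed.

Lemma expect_natZ rho n M : expect rho (n%:R *: M) = n%:R * expect rho M.
Proof. by rewrite -(rmorph_nat rc) expectZ. Qed.

Lemma expect_real_comb rho n (c : 'I_n -> R) (M : 'I_n -> 'M[C]_m) :
  expect rho (\sum_(i < n) rc (c i) *: M i) = \sum_(i < n) c i * expect rho (M i).
Proof.
have expect0 : expect rho 0 = 0 by rewrite /expect mulmx0 mxtrace0.
rewrite (big_morph _ (expectD rho) expect0).
by apply: eq_bigr => i _; rewrite expectZ.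
Qed.

Lemma expect1 rho : density rho -> expect rho 1%:M = 1.
Proof. by case=> _ _ tr1; rewrite /expect mulmx1 tr1. Qed.

(* [tr (rho A^* A) = tr (A rho A^* )] is a sum of values [v^* rho v] on the
   conjugated rows [v] of [A]. *)
Lemma expect_adjM_ge0 rho A : density rho -> 0 <= expect rho (adjmx A *m A).
Proof.
case=> _ psd _; rewrite /expect mulmxA mxtrace_mulC mulmxA.
have row_form k : (A *m rho *m adjmx A) k k =
   ((map_mx Num.conj (\col_l Num.conj (A k l)))^T *m rho *m (\col_l Num.conj (A k l))) 0 0.
  rewrite !mxE; apply: eq_bigr => l _; rewrite !mxE; congr (_ * _).
  by apply: eq_bigr => p _; rewrite !mxE conjCK.
have : 0 <= \tr (A *m rho *m adjmx A).
  by apply: sumr_ge0 => k _; rewrite row_form.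
by rewrite lecE => /andP [].
Qed.

(* Variance is nonnegative: apply the previous lemma to [M - <M>]. *)
Lemma expect_sqr_le rho M : density rho -> adjmx M = M ->
  expect rho M ^+ 2 <= expect rho (M *m M).
Proof.
move=> drho hM; set t := expect rho M.
pose A := M - (rc t)%:M.
have hA : adjmx A = A.
  apply/matrixP => i j; move/matrixP: hM => /(_ i j); rewrite !mxE => <-.
  rewrite rmorphB rmorphMn; congr (_ - _ *+ _); last by rewrite eq_sym.
  by apply: conj_Creal; rewrite complex_real.
have := expect_adjM_ge0 A drho; rewrite hA /A.
rewrite mulmxBl !mulmxBr mul_scalar_mx mul_mx_scalar mul_scalar_mx.
rewrite !expectB !expectZ -scalemx1 expectZ expect1 // -/t.
nra.
Qed.

Lemma density_delta (k : 'I_m) : density (delta_mx k k : 'M[C]_m).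
Proof.
split.
- by apply/matrixP => i j; rewrite !mxE rmorph_nat andbC.
- move=> v; rewrite -(mul_delta_mx (0 : 'I_1)) !mulmxA -colE -mulmxA -rowE.
  by rewrite !mxE big_ord1 !mxE mulrC mul_conjC_ge0.
- rewrite /mxtrace (bigD1 k) //= big1 ?addr0; first by rewrite mxE !eqxx.
  by move=> i /negbTE ik; rewrite mxE ik.
Qed.

Lemma expect_delta (k : 'I_m) M : expect (delta_mx k k) M = Re (M k k).
Proof.
rewrite /expect -(mul_delta_mx (0 : 'I_1)) -mulmxA mxtrace_mulC -rowE.
by rewrite trace_mx11 -colE !mxE.
Qed.

End Expectation.

Definition nonedge (e : nat) : 'I_7 * 'I_7 :=
  match e with
  | 0 => (vtx 0, vtx 2) | 1 => (vtx 0, vtx 5) | 2 => (vtx 1, vtx 5) | 3 => (vtx 1, vtx 6)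
  | 4 => (vtx 2, vtx 4) | 5 => (vtx 2, vtx 6) | _ => (vtx 3, vtx 5)
  end%N.

Lemma nonedgeP e : G7 (nonedge e).1 (nonedge e).2 = false.
Proof. by case: e => [|[|[|[|[|[|e]]]]]]. Qed.

Definition nonedge_sign (e f : nat) : bool :=
  G7 (nonedge e).1 (nonedge f).1 (+) G7 (nonedge e).1 (nonedge f).2 (+)
  G7 (nonedge e).2 (nonedge f).1 (+) G7 (nonedge e).2 (nonedge f).2.

Definition nonedge_pair (a : nat) : nat * nat :=
  match a with 0 => (2, 4) | 1 => (4, 6) | _ => (5, 6) end%N.

Lemma nonedge_pairP a : nonedge_sign (nonedge_pair a).1 (nonedge_pair a).2 = false.
Proof. by case: a => [|[|a]]. Qed.

Definition nonedge_pair_sign (a b : nat) : bool :=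
  nonedge_sign (nonedge_pair a).1 (nonedge_pair b).1 (+)
  nonedge_sign (nonedge_pair a).1 (nonedge_pair b).2 (+)
  nonedge_sign (nonedge_pair a).2 (nonedge_pair b).1 (+)
  nonedge_sign (nonedge_pair a).2 (nonedge_pair b).2.

Section NonedgeSums.
Variable V : zmodType.
Implicit Type F : nat -> nat -> V.

Lemma sum_ord3 (G : nat -> V) : \sum_(a < 3) G a = G 0%N + G 1%N + G 2%N.
Proof. by rewrite !big_ord_recl big_ord0 /= addr0 addrA. Qed.

Lemma sum_ord7 (G : nat -> V) :
  \sum_(a < 7) G a = G 0%N + G 1%N + G 2%N + G 3%N + G 4%N + G 5%N + G 6%N.
Proof. by rewrite !big_ord_recl big_ord0 /= addr0 !addrA. Qed.

Lemma G7_commuting_pairs F :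
  \sum_(i < 7) \sum_(j < 7 | (i < j)%N && ~~ G7 i j) F i j =
  \sum_(e < 7) F (nonedge e).1 (nonedge e).2.
Proof.
under eq_bigr => i _ do rewrite big_mkcond.
by rewrite !big_ord_recl !big_ord0 /= ?addr0 ?add0r !addrA.
Qed.

Lemma nonedge_commuting_pairs F :
  \sum_(e < 7) \sum_(f < 7 | (e < f)%N && ~~ nonedge_sign e f) F e f =
  \sum_(a < 3) F (nonedge_pair a).1 (nonedge_pair a).2.
Proof.
under eq_bigr => i _ do rewrite big_mkcond.
by rewrite !big_ord_recl !big_ord0 /= ?addr0 ?add0r !addrA.
Qed.

Lemma nonedge_pair_commuting_pairs F :
  \sum_(a < 3) \sum_(b < 3 | (a < b)%N && ~~ nonedge_pair_sign a b) F a b = 0.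
Proof.
under eq_bigr => i _ do rewrite big_mkcond.
by rewrite !big_ord_recl !big_ord0 /= ?addr0.
Qed.

End NonedgeSums.

Section G7Operators.
Variable R : realType.
Local Notation C := R[i].
Local Notation rc := (real_complex R).

(* Indexed by [nat] so that sums over ['I_7] unfold to numerals ([inord k] is junk
   for [k >= 7]). *)
Definition Smx (k : nat) : 'M[C]_(2 ^ 3) := pauli_string R (S7 (inord k)).

Lemma Smx_ord (i : 'I_7) : Smx i = pauli_string R (S7 i).
Proof. by rewrite /Smx inord_val. Qed.

Lemma Smx_sqr k : Smx k *m Smx k = 1%:M.
Proof. exact: pauli_string3_sqr. Qed.

Lemma adj_Smx k : adjmx (Smx k) = Smx k.
Proof. exact: adj_pauli_string3. Qed.

Lemma Smx_sign_commute (i j : 'I_7) : sign_commute (G7 i j) (Smx i) (Smx j).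
Proof. by rewrite !Smx_ord G7_string_anticomm; exact: pauli_string3_sign_commute. Qed.

Definition Tmx (e : nat) := Smx (nonedge e).1 *m Smx (nonedge e).2.

Lemma Smx_nonedge_commute e : Smx (nonedge e).2 *m Smx (nonedge e).1 = Tmx e.
Proof. by apply: sign_commute_false; rewrite -(nonedgeP e); exact: Smx_sign_commute. Qed.

Lemma Tmx_sqr e : Tmx e *m Tmx e = 1%:M.
Proof. by apply: commuting_involutionsM; rewrite ?Smx_sqr ?Smx_nonedge_commute. Qed.

Lemma adj_Tmx e : adjmx (Tmx e) = Tmx e.
Proof. by apply: adjmx_commuteM; rewrite ?adj_Smx ?Smx_nonedge_commute. Qed.

Lemma Tmx_sign_commute e f : sign_commute (nonedge_sign e f) (Tmx e) (Tmx f).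
Proof. by apply: sign_commuteM; exact: Smx_sign_commute. Qed.

Definition Umx (a : nat) := Tmx (nonedge_pair a).1 *m Tmx (nonedge_pair a).2.

Lemma Tmx_pair_commute a : Tmx (nonedge_pair a).2 *m Tmx (nonedge_pair a).1 = Umx a.
Proof.
by apply: sign_commute_false; rewrite -(nonedge_pairP a); exact: Tmx_sign_commute.
Qed.

Lemma Umx_sqr a : Umx a *m Umx a = 1%:M.
Proof. by apply: commuting_involutionsM; rewrite ?Tmx_sqr ?Tmx_pair_commute. Qed.

Lemma adj_Umx a : adjmx (Umx a) = Umx a.
Proof. by apply: adjmx_commuteM; rewrite ?adj_Tmx ?Tmx_pair_commute. Qed.

Lemma Umx_sign_commute a b : sign_commute (nonedge_pair_sign a b) (Umx a) (Umx b).
Proof. by apply: sign_commuteM; exact: Tmx_sign_commute. Qed.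

Variable x : nat -> R.

Definition ncoef (e : nat) : R := x (nonedge e).1 * x (nonedge e).2.
Definition pcoef (a : nat) : R := ncoef (nonedge_pair a).1 * ncoef (nonedge_pair a).2.

Definition Hmx := \sum_(k < 7) rc (x k) *: Smx k.
Definition Nmx := \sum_(e < 7) rc (ncoef e) *: Tmx e.
Definition Kmx := \sum_(a < 3) rc (pcoef a) *: Umx a.

Lemma Hmx_sqr : Hmx *m Hmx = rc (\sum_(k < 7) x k ^+ 2) *: 1%:M + 2%:R *: Nmx.
Proof.
rewrite (lin_comb_involutions_sqr (fun k : 'I_7 => rc (x k)) (fun k => Smx_sqr k)
  Smx_sign_commute).
rewrite (G7_commuting_pairs (fun a b => (rc (x a) * rc (x b)) *: (Smx a *m Smx b))).
by rewrite rmorph_sum; congr (_ *: _ + _ *: _); apply: eq_bigr => i _;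
  rewrite ?rmorphXn ?rmorphM.
Qed.

Lemma Nmx_sqr : Nmx *m Nmx = rc (\sum_(e < 7) ncoef e ^+ 2) *: 1%:M + 2%:R *: Kmx.
Proof.
rewrite (lin_comb_involutions_sqr (fun e : 'I_7 => rc (ncoef e)) (fun e => Tmx_sqr e)
  (fun e f => Tmx_sign_commute e f)).
rewrite (nonedge_commuting_pairs
  (fun e f => (rc (ncoef e) * rc (ncoef f)) *: (Tmx e *m Tmx f))).
by rewrite rmorph_sum; congr (_ *: _ + _ *: _); apply: eq_bigr => i _;
  rewrite ?rmorphXn ?rmorphM.
Qed.

Lemma Kmx_sqr : Kmx *m Kmx = rc (\sum_(a < 3) pcoef a ^+ 2) *: 1%:M.
Proof.
rewrite (lin_comb_involutions_sqr (fun a : 'I_3 => rc (pcoef a)) (fun a => Umx_sqr a)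
  (fun a b => Umx_sign_commute a b)).
rewrite (nonedge_pair_commuting_pairs
  (fun a b => (rc (pcoef a) * rc (pcoef b)) *: (Umx a *m Umx b))) scaler0 addr0 rmorph_sum.
by congr (_ *: _); apply: eq_bigr => a _; rewrite rmorphXn.
Qed.

Lemma adj_Hmx : adjmx Hmx = Hmx.
Proof. by rewrite adjmx_real_comb; under eq_bigr do rewrite adj_Smx. Qed.

Lemma adj_Nmx : adjmx Nmx = Nmx.
Proof. by rewrite adjmx_real_comb; under eq_bigr do rewrite adj_Tmx. Qed.

Lemma adj_Kmx : adjmx Kmx = Kmx.
Proof. by rewrite adjmx_real_comb; under eq_bigr do rewrite adj_Umx. Qed.

End G7Operators.

Section QuadraticInequalities.
Variable R : rcfType.

Lemma mul_subr_le (p r A B k y : R) :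
  0 <= A -> 0 <= B -> A < p -> B < r -> y ^+ 2 <= p * r * k -> k <= A * B ->
  (p - A) * (r - B) <= p * r + k - 2 * y.
Proof.
move=> A0 B0 Ap Br ypr kAB.
have pr0 : 0 < p * r by apply: mulr_gt0; lra.
have k0 : 0 <= k by rewrite -(pmulr_rge0 k pr0); have := sqr_ge0 y; lra.
pose G := Num.sqrt (p * r); pose m := Num.sqrt (A * B); pose h := Num.sqrt k.
have G0 : 0 <= G := sqrtr_ge0 _.
have m0 : 0 <= m := sqrtr_ge0 _.
have h0 : 0 <= h := sqrtr_ge0 _.
have Gpr : G ^+ 2 = p * r by rewrite sqr_sqrtr //; nra.
have mAB : m ^+ 2 = A * B by rewrite sqr_sqrtr ?mulr_ge0.
have hk : h ^+ 2 = k by rewrite sqr_sqrtr.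
have hm : h <= m by nra.
have mG : m <= G by nra.
have yGh : y <= G * h.
  have : y ^+ 2 <= (G * h) ^+ 2 by rewrite exprMn Gpr hk.
  have : 0 <= G * h by exact: mulr_ge0.
  nra.
(* AM-GM: [(p B + A r)^2 - (2 G m)^2 = (p B - A r)^2] *)
have amgm : 2 * G * m <= p * B + A * r.
  have : (2 * G * m) ^+ 2 <= (p * B + A * r) ^+ 2.
    have -> : (2 * G * m) ^+ 2 = 4 * G ^+ 2 * m ^+ 2 by ring.
    rewrite Gpr mAB; have := sqr_ge0 (p * B - A * r); nra.
  have : 0 <= p * B + A * r by nra.
  nra.
(* [(p - A) (r - B) <= (G - m)^2 <= (G - h)^2 <= p r + k - 2 y] *)
have : (G - m) ^+ 2 <= (G - h) ^+ 2 by nra.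
nra.
Qed.

Lemma four_mul_le_sqr (c a b E : R) :
  0 <= c -> 0 <= E -> (0 < a -> 0 < b -> a * b <= E) ->
  4 * (a * b) <= (c - a - b) ^+ 2 + 4 * E.
Proof.
move=> c0 E0 abE; have := sqr_ge0 (c - a - b).
have [ab0|ab0] := lerP (a * b) 0; first by nra.
have [a0|a0] := ltrP 0 a.
  have b0 : 0 < b by nra.
  by have := abE a0 b0; nra.
have bn : b < 0 by nra.
have : 4 * (a * b) <= (a + b) ^+ 2 by have := sqr_ge0 (a - b); nra.
have : (a + b) ^+ 2 <= (c - a - b) ^+ 2 by nra.
nra.
Qed.

Lemma G7_nonedge_ineq (u0 u1 u2 u3 u4 u5 u6 y : R) :
  0 <= u0 -> 0 <= u1 -> 0 <= u2 -> 0 <= u3 -> 0 <= u4 -> 0 <= u5 -> 0 <= u6 ->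
  y ^+ 2 <= u2 * u5 * (u1 * u4 + u3 * u4 + u3 * u6) ->
  4 * ((u0 * u2 + u0 * u5 + u1 * u5 + u1 * u6 + u2 * u4 + u2 * u6 + u3 * u5) + 2 * y)
    <= (u0 + u1 + u2 + u3 + u4 + u5 + u6) ^+ 2.
Proof.
move=> u0_0 u1_0 u2_0 u3_0 u4_0 u5_0 u6_0.
set k := u1 * u4 + u3 * u4 + u3 * u6 => yk.
have k0 : 0 <= k by rewrite /k; nra.
have E0 : 0 <= u2 * u5 + k - 2 * y.
  have : 0 <= u2 * u5 by nra.
  by have := sqr_ge0 (u2 * u5 - k); nra.
have := @four_mul_le_sqr u0 (u2 - (u4 + u6)) (u5 - (u1 + u3)) _ u0_0 E0.
have Ep : 0 < u2 - (u4 + u6) -> 0 < u5 - (u1 + u3) ->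
    (u2 - (u4 + u6)) * (u5 - (u1 + u3)) <= u2 * u5 + k - 2 * y.
  move=> h2 h5; apply: mul_subr_le => //; try lra.
  by rewrite /k; nra.
move=> /(_ Ep); rewrite -subr_ge0 => h; rewrite -subr_ge0.
by congr (0 <= _): h; rewrite /k; ring.
Qed.

Lemma le_two_of_sqr_bounds (s n : R) :
  0 <= s -> s ^+ 2 <= s + 2 * n -> 4 * n ^+ 2 <= s ^+ 2 -> s <= 2.
Proof.
move=> s0 sn ns; have n_s : 2 * n <= s by nra.
nra.
Qed.

End QuadraticInequalities.

Section G7Beta.
Variable R : realType.
Local Notation C := R[i].

Lemma G7_beta_bound (rho : 'M[C]_(2 ^ 3)) : density rho ->
  \sum_(i < 7) expect rho (pauli_string R (S7 i)) ^+ 2 <= 2.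
Proof.
move=> drho; pose x k := expect rho (Smx R k).
set s := \sum_(i < 7) _.
have s0 : 0 <= s by apply: sumr_ge0 => i _; exact: sqr_ge0.
have xs : \sum_(k < 7) x k ^+ 2 = s by apply: eq_bigr => i _; rewrite /x Smx_ord.
have Hx : expect rho (Hmx x) = s.
  by rewrite /Hmx expect_real_comb -xs; apply: eq_bigr => k _; rewrite expr2.
have var_H := expect_sqr_le drho (adj_Hmx x).
have var_N := expect_sqr_le drho (adj_Nmx x).
have var_K := expect_sqr_le drho (adj_Kmx x).
clearbody x.
rewrite Hmx_sqr expectD expectZ expect1 // expect_natZ mulr1 xs Hx in var_H.
rewrite Nmx_sqr expectD expectZ expect1 // expect_natZ mulr1 in var_N.
rewrite Kmx_sqr expectZ expect1 // mulr1 in var_K.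
rewrite (sum_ord7 (fun e => ncoef x e ^+ 2)) /ncoef /= !exprMn in var_N.
rewrite (sum_ord3 (fun a => pcoef x a ^+ 2)) /pcoef /ncoef /= in var_K.
rewrite (_ : _ + _ + _ = x 2 ^+ 2 * x 5 ^+ 2 *
  (x 1 ^+ 2 * x 4 ^+ 2 + x 3 ^+ 2 * x 4 ^+ 2 + x 3 ^+ 2 * x 6 ^+ 2)) in var_K; last by ring.
have s_eq : s = x 0 ^+ 2 + x 1 ^+ 2 + x 2 ^+ 2 + x 3 ^+ 2 + x 4 ^+ 2 + x 5 ^+ 2 + x 6 ^+ 2.
  by rewrite -xs (sum_ord7 (fun k => x k ^+ 2)).
have := G7_nonedge_ineq (sqr_ge0 (x 0)) (sqr_ge0 (x 1)) (sqr_ge0 (x 2)) (sqr_ge0 (x 3))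
  (sqr_ge0 (x 4)) (sqr_ge0 (x 5)) (sqr_ge0 (x 6)) var_K.
rewrite -s_eq => ineq.
apply: (le_two_of_sqr_bounds s0 var_H); lra.
Qed.

Lemma G7_basis_state_value :
  \sum_(i < 7) expect (delta_mx ord0 ord0) (pauli_string R (S7 i)) ^+ 2 = 2 :> R.
Proof.
under eq_bigr do rewrite expect_delta pauli_string3 mxE !bitkE.
by rewrite !big_ord_recl big_ord0 /= !mxE /=; ring.
Qed.

End G7Beta.

Lemma G7_no_indep_triple (i j k : 'I_7) :
  i != j -> j != k -> k != i -> G7 i j || G7 j k || G7 k i.
Proof.
by case: i => [[|[|[|[|[|[|[|//]]]]]]] ?]; case: j => [[|[|[|[|[|[|[|//]]]]]]] ?];
  case: k => [[|[|[|[|[|[|[|//]]]]]]] ?].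
Qed.

Lemma G7_indep_card (A : {set 'I_7}) : indep G7 A -> (#|A| <= 2)%N.
Proof.
move=> /forallP indepA; rewrite leqNgt; apply/negP.
move=> /card_gt2P [a [b [c [[aA bA cA] [ab bc ca]]]]].
have nonadj u v : u \in A -> v \in A -> G7 u v = false.
  by move=> uA vA; move/forallP: (implyP (indepA u) uA) => /(_ v) /implyP /(_ vA) /negbTE.
by move: (G7_no_indep_triple ab bc ca); rewrite !nonadj.
Qed.

Lemma indep_G7_02 : indep G7 [set vtx 0; vtx 2].
Proof.
apply/forallP => i; apply/implyP; rewrite !inE => /orP [] /eqP ->;
  by apply/forallP => j; apply/implyP; rewrite !inE => /orP [] /eqP ->.
Qed.

Lemma alpha_G7 (R : realType) : alpha G7 (fun _ => 1 : R) = 2.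
Proof.
rewrite /alpha; apply/eqP; rewrite eq_le; apply/andP; split.
  apply: (big_ind (fun v : R => v <= 2)) => // [a b a2 b2|A indepA].
    by rewrite ge_max a2 b2.
  by rewrite sumr_const ler_nat; exact: G7_indep_card.
rewrite (bigD1 _ indep_G7_02) /= le_max; apply/orP; left.
by rewrite sumr_const cards2.
Qed.

Theorem mainTheorem15 (R : realType) :
  realizes R G7 S7 /\
  beta S7 (fun _ => (1 : R)) = 2 /\
  alpha G7 (fun _ => (1 : R)) = 2.
Proof.
split; first exact: realizes_G7.
split; last exact: alpha_G7.
rewrite /beta; set E := (fun x : R => _).
have E_ub : ubound E 2.
  move=> _ [rho [drho ->]]; under eq_bigr do rewrite mul1r.
  exact: G7_beta_bound.
have E2 : E 2.
  exists (delta_mx ord0 ord0); split; first exact: density_delta.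
  by under eq_bigr do rewrite mul1r; rewrite G7_basis_state_value.
apply/eqP; rewrite eq_le ge_sup //=; last by exists 2.
by apply: sup_upper_bound => //; split; exists 2.
Qed.
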